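(* Let $(X,\sigma,T)$ and $(X',\sigma',T)$ be as in the context, both with no extra spectrum, and let $\Phi:E(X)\to E(X')$ be an Ellis morphism. Let $e$ be a minimal idempotent of $E(X)$, $L=E(X)e$, $e'=\Phi(e)$, and let $x\in e\pi_{eq}^{-1}(0)$, $x'\in e'\pi_{eq}'^{-1}(0)$. Suppose that (1) every point lying in a singular fibre $\pi_{eq}^{-1}(\xi)$, $\xi\in X_{eq}^{sing}$, separates the idempotents of $L$; (2) $\widetilde{\Phi_{eq}}(X_{eq}^{reg})\subset X_{eq}'^{reg}$; (3) $\Phi(\mathrm{stab}_{\mathcal G}(x))\subset\mathrm{stab}_{\mathcal G'}(x')$. Then $x\mapsto x'$ extends to a factor map $\phi:(X,\sigma)\to(X',\sigma')$ with $\Phi=\phi_*$.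
   Context: $T$ is an abelian group; $(X,\sigma,T)$, $(X',\sigma',T)$ are continuous minimal non-distal actions on compact Hausdorff spaces. $E(X)$ is the Ellis semigroup (closure of $\{\sigma^t\}$ in $X^X$, pointwise topology, composition) with $T$-action $\sigma_E^t(f)=\sigma^t\circ f$. An Ellis morphism is a continuous monoid morphism $\Phi:E(X)\to E(X')$ with $\Phi(\sigma_E^tf)=\sigma'^t_E\Phi(f)$; a factor map $\phi$ induces $\phi_*(f)(\phi(y))=\phi(f(y))$. Points $x,y$ are proximal if $f(x)=f(y)$ for some $f\in E(X)$. $\pi_{eq}:X\to X_{eq}$ is the maximal equicontinuous factor; $X_{eq}$ is a compact abelian group whose neutral element $0$ is singular; $\xi$ is singular if $\pi_{eq}^{-1}(\xi)$ contains two distinct proximal points, regular otherwise; $X^{sing}_{eq}$, $X^{reg}_{eq}$ are the sets of singular/regular points. $\mathcal G=eL$, $\mathrm{stab}_{\mathcal G}(x)=\{g\in\mathcal G:g(x)=x\}$; $L'=E(X')e'$, $\mathcal G'=e'L'$; primed objects are defined analogously. A point separates the idempotents of $L$ if evaluation at it is injective on the idempotents of $L$. $\tilde\pi_{eq}:L\to X_{eq}$, $\tilde\pi_{eq}(f)=\pi_{eq}(f(y))-\pi_{eq}(y)$; $L^{fib}=\tilde\pi_{eq}^{-1}(0)$, $\mathcal G^{fib}=\mathcal G\cap L^{fib}$; $\Gamma$ is the little structure group (subgroup of $\mathcal G$ generated by the entries of the sandwich matrix of a Rees matrix representation of the kernel of $E(X)$). No extra spectrum: the closure of the normal closure of $\Gamma$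 in $\mathcal G$ equals $\mathcal G^{fib}$; in that case the factor map $\eta_0:L_{eq}\to X_{eq}$ with $\tilde\pi_{eq}=\eta_0\circ\pi^L_{eq}$ (where $\pi^L_{eq}:L\to L_{eq}$ is the maximal equicontinuous factor of $(L,\sigma_E|_L)$) is bijective. $\Phi$ restricts to a factor map $L\to L'$, inducing $\Phi_{eq}:L_{eq}\to L'_{eq}$, and $\widetilde{\Phi_{eq}}:=\eta_0'\circ\Phi_{eq}\circ\eta_0^{-1}:X_{eq}\to X'_{eq}$. *)

From HB Require Import structures.
From mathcomp Require Import all_boot all_order all_algebra.
From mathcomp Require Import all_classical.
From mathcomp Require Import topology tvs.

Set Implicit Arguments.
Unset Strict Implicit.
Unset Printing Implicit Defensive.

Import GRing.Theory.
Local Open Scope classical_set_scope.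
Local Open Scope ring_scope.

Section Dyn.
Variable T : zmodType.

Definition is_action (X : Type) (s : T -> X -> X) :=
  (forall x, s 0 x = x) /\ (forall t u x, s (t + u) x = s t (s u x)).

Definition tds (X : topologicalType) (s : T -> X -> X) :=
  [/\ hausdorff_space X, compact [set: X], is_action s &
      forall t, continuous (s t)].

Definition minimal_sys (X : topologicalType) (s : T -> X -> X) :=
  forall x : X, closure (range (fun t => s t x)) = [set: X].

Definition Ellis (X : topologicalType) (s : T -> X -> X) : set (X -> X) :=
  @closure {ptws X -> X} (range s).

Definition proximal (X : topologicalType) (s : T -> X -> X) (x y : X) :=
  exists f, Ellis s f /\ f x = f y.

Definition distal (X : topologicalType) (s : T -> X -> X) :=
  forall x y, proximal s x y -> x = y.

Definition ellis_morphism (X X' : topologicalType) (s : T -> X -> X)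
    (s' : T -> X' -> X') (Phi : (X -> X) -> (X' -> X')) :=
  [/\ forall f, Ellis s f -> Ellis s' (Phi f),
      {within (Ellis s : set {ptws X -> X}),
         continuous (Phi : {ptws X -> X} -> {ptws X' -> X'})},
      forall f g, Ellis s f -> Ellis s g -> Phi (f \o g) = Phi f \o Phi g,
      Phi id = id &
      forall t f, Ellis s f -> Phi (s t \o f) = s' t \o Phi f].

Definition factor_map (X Y : topologicalType) (s : T -> X -> X)
    (tau : T -> Y -> Y) (p : X -> Y) :=
  [/\ continuous p, (forall y, exists x, p x = y) &
      forall t x, p (s t x) = tau t (p x)].

Section Ideals.
Variables (X : topologicalType) (s : T -> X -> X).

Definition idempotent (f : X -> X) := f \o f = f.

Definition left_ideal (L : set (X -> X)) :=
  [/\ L `<=` Ellis s, L !=set0 &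
      forall f g, Ellis s f -> L g -> L (f \o g)].

Definition min_left_ideal (L : set (X -> X)) :=
  left_ideal L /\ forall L', left_ideal L' -> L' `<=` L -> L' = L.

Definition Lof (e : X -> X) : set (X -> X) := [set f \o e | f in Ellis s].
Definition Rof (e : X -> X) : set (X -> X) := [set e \o f | f in Ellis s].
Definition Gof (e : X -> X) : set (X -> X) := [set e \o f | f in Lof e].

Definition min_idempotent (e : X -> X) :=
  [/\ Ellis s e, idempotent e & min_left_ideal (Lof e)].

Definition subgroupG (e : X -> X) (H : set (X -> X)) :=
  [/\ H `<=` Gof e, H e,
      (forall g h, H g -> H h -> H (g \o h)) &
      (forall g k, H g -> Gof e k -> k \o g = e -> H k)].

Definition normalG (e : X -> X) (H : set (X -> X)) :=
  subgroupG e H /\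
  forall g h k, Gof e g -> H h -> Gof e k -> k \o g = e -> H (g \o h \o k).

(** entries of the sandwich matrix of the Rees matrix representation of the
    kernel of E(X) built on the group G = eE(X)e, with the idempotents of
    eE(X) and of E(X)e as representatives *)
Definition sandwich_entries (e : X -> X) : set (X -> X) :=
  [set g | exists u v, [/\ Lof e u, idempotent u, Rof e v, idempotent v &
                           g = v \o u]].

Definition little_structure_group (e : X -> X) : set (X -> X) :=
  \bigcap_(H in [set H | subgroupG e H /\ sandwich_entries e `<=` H]) H.

Definition normal_closureG (e : X -> X) (A : set (X -> X)) : set (X -> X) :=
  \bigcap_(H in [set H | normalG e H /\ A `<=` H]) H.

Definition stabG (e : X -> X) (x : X) : set (X -> X) :=
  [set g | Gof e g /\ g x = x].

Definition separates_idempotents (e : X -> X) (y : X) :=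
  forall u v, Lof e u -> Lof e v -> idempotent u -> idempotent v ->
    u y = v y -> u = v.

End Ideals.

Definition max_eq_factor (X : topologicalType) (s : T -> X -> X)
    (Xeq : topologicalZmodType) (chi : T -> Xeq) (pi : X -> Xeq) :=
  [/\ hausdorff_space Xeq, compact [set: Xeq],
      (forall t u, chi (t + u) = chi t + chi u),
      factor_map s (fun t (z : Xeq) => z + chi t) pi &
      forall (Y : puniformType) (tau : T -> Y -> Y) (p : X -> Y),
        tds tau -> equicontinuous [set: T] tau -> factor_map s tau p ->
        exists q : Xeq -> Y, continuous q /\ forall x, p x = q (pi x)].

Section Eq.
Variables (X : topologicalType) (s : T -> X -> X) (Xeq : zmodType)
  (pi : X -> Xeq).

Definition singular (xi : Xeq) :=
  exists y z, [/\ pi y = xi, pi z = xi, y <> z & proximal s y z].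

Definition regular (xi : Xeq) := ~ singular xi.

(** \tilde pi_eq (f) computed at the point y (independent of y) *)
Definition tpi (f : X -> X) (y : X) : Xeq := pi (f y) - pi y.

Definition Lfib (e : X -> X) : set (X -> X) :=
  [set f | Lof s e f /\ forall y, tpi f y = 0].

Definition Gfib (e : X -> X) : set (X -> X) := Gof s e `&` Lfib e.

Definition no_extra_spectrum :=
  forall e, min_idempotent s e ->
    (@closure {ptws X -> X}
       (normal_closureG s e (little_structure_group s e))) `&` Gof s e
    = Gfib e.

End Eq.

End Dyn.

From HB Require Import structures.
From mathcomp Require Import all_boot all_order all_algebra.
From mathcomp Require Import all_classical.
From mathcomp Require Import topology tvs.

(* By minimality every point of X is k x for some k in E(X), so the factor map
   has to be phi (k x) := Phi k x'.  Such a phi is automatically equivariant,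
   intertwines Phi with phi_*, and is continuous because E(X) is compact and
   Phi is continuous.  The content is that Phi k x' only depends on k x.
   Reduce to f, g in L = E(X)e with f x = g x.  Composing g with an element of
   the stabiliser of x in G = eL, which by (3) fixes x', we may assume
   e f = e g.  If the fibre of f x is singular, f (ef)^-1 and g (ef)^-1 are
   idempotents of L that agree at f x, so (1) gives f = g.  Otherwise the
   idempotent Phi e identifies Phi f x' and Phi g x', which are therefore
   proximal points in a fibre of pi' that (2) makes regular: they coincide. *)

Set Implicit Arguments.
Unset Strict Implicit.
Unset Printing Implicit Defensive.

Import GRing.Theory.
Local Open Scope classical_set_scope.
Local Open Scope ring_scope.

Section Pointwise.
Variables (U : Type) (V : topologicalType).

Lemma ptws_cvgP (F : set_system {ptws U -> V}) (f : {ptws U -> V}) :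
  Filter F -> F --> f <-> forall u, (fun g : U -> V => g u) @ F --> f u.
Proof.
move=> FF; rewrite /product_topology_def cvg_sup; split.
- move=> + u => /(_ u).
  rewrite cvg_image; last by rewrite eqEsubset; split=> v // _; exists (cst v).
  apply: cvg_trans => W /=; rewrite ?nbhs_simpl /fmap /= => [[W' + <-]].
  by apply: filterS => g W'g /=; exists g.
- move=> Ff u.
  rewrite cvg_image; last by rewrite eqEsubset; split=> v // _; exists (cst v).
  move=> W /Ff /= FW; exists ((fun g : U -> V => g u) @^-1` W) => //.
  by rewrite eqEsubset; split => [v [? + <-//]|v Wv]; exists (fun _ => v).
Qed.

Lemma ptws_eval_continuous (u : U) :
  continuous (fun f : {ptws U -> V} => f u).
Proof. by move=> f; move/ptws_cvgP: (@cvg_id _ (nbhs f)); apply. Qed.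

Lemma ptws_continuous (Y : topologicalType) (F : Y -> {ptws U -> V}) :
  (forall u, continuous (fun y => F y u)) -> continuous F.
Proof. by move=> cF y; apply/ptws_cvgP => u; exact: cF. Qed.

End Pointwise.

Section EllisSemigroup.
Variables (T : zmodType) (X : topologicalType) (s : T -> X -> X).

Lemma minimal_orbit_closed (A : set X) (x : X) :
  minimal_sys s -> closed A -> (forall t, A (s t x)) -> forall y, A y.
Proof.
move=> s_min clA sA y.
have : closure (range (fun t => s t x)) `<=` A.
  by rewrite closureE; apply: smallest_sub => // _ [t _ <-].
by rewrite s_min; apply.
Qed.

Lemma Ellis_act t : Ellis s (s t).
Proof. by apply: subset_closure; exists t. Qed.

Lemma Ellis_sub_closed (A : set {ptws X -> X}) :
  closed A -> (forall t, A (s t)) -> Ellis s `<=` A.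
Proof.
by move=> clA sA; rewrite /Ellis closureE; apply: smallest_sub => // _ [t _ <-].
Qed.

Lemma Ellis_stable (F : {ptws X -> X} -> {ptws X -> X}) :
  continuous F -> (forall t, Ellis s (F (s t))) ->
  forall f, Ellis s f -> Ellis s (F f).
Proof.
move=> cF Fs; apply: (@Ellis_sub_closed (F @^-1` Ellis s)) => //.
by move/continuous_closedP : cF; apply; exact: closed_closure.
Qed.

Lemma Ellis_compact :
  compact [set: X] -> compact (Ellis s : set {ptws X -> X}).
Proof.
move=> cX; have cE : closed (Ellis s : set {ptws X -> X}) by exact: closed_closure.
by apply: (subclosed_compact cE (@tychonoff X (fun=> X) (fun=> setT) (fun=> cX))).
Qed.

Lemma Ellis_orbit x y :
  hausdorff_space X -> compact [set: X] -> minimal_sys s ->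
  exists2 k, Ellis s k & k x = y.
Proof.
move=> X_hausdorff X_compact s_min.
have orbit_compact :
    compact ((fun k : {ptws X -> X} => k x) @` (Ellis s : set {ptws X -> X})).
  apply: continuous_compact; last exact: Ellis_compact.
  exact/continuous_subspaceT/ptws_eval_continuous.
have /(_ y)[k Ek kx] :
    forall z, ((fun k : {ptws X -> X} => k x) @` Ellis s) z.
  apply: (minimal_orbit_closed s_min (compact_closed X_hausdorff orbit_compact)).
  by move=> t; exists (s t); first exact: Ellis_act.
by exists k.
Qed.

Hypothesis s_action : is_action s.
Hypothesis s_continuous : forall t, continuous (s t).

Lemma Ellis_id : Ellis s id.
Proof.
have -> : (id : X -> X) = s 0 by apply: funext => y; rewrite s_action.1.
exact: Ellis_act.
Qed.

Lemma Ellis_comp_act t f : Ellis s f -> Ellis s (s t \o f).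
Proof.
apply: (@Ellis_stable (fun f : {ptws X -> X} => s t \o f)).
  apply: ptws_continuous => y g.
  apply: (@continuous_comp _ _ _ (fun h : {ptws X -> X} => h y) (s t)).
    exact: ptws_eval_continuous.
  exact: s_continuous.
move=> u; have -> : s t \o s u = s (t + u).
  by apply: funext => y; rewrite /= s_action.2.
exact: Ellis_act.
Qed.

Lemma Ellis_comp f g : Ellis s f -> Ellis s g -> Ellis s (f \o g).
Proof.
move=> Ef Eg; apply: (@Ellis_stable (fun f : {ptws X -> X} => f \o g)) Ef.
  by apply: ptws_continuous => y; exact: ptws_eval_continuous.
by move=> t; exact: Ellis_comp_act.
Qed.

End EllisSemigroup.

Section RotationFactor.
Variables (T : zmodType) (X : topologicalType) (s : T -> X -> X).
Variables (Xeq : topologicalZmodType) (chi : T -> Xeq) (pi : X -> Xeq).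
Hypothesis Xeq_hausdorff : hausdorff_space Xeq.
Hypothesis pi_continuous : continuous pi.
Hypothesis pi_act : forall t y, pi (s t y) = pi y + chi t.

Lemma tpi_Ellis_const h y z : Ellis s h -> tpi pi h y = tpi pi h z.
Proof.
have pi_eval w : continuous (fun k : {ptws X -> X} => pi (k w)).
  move=> k; apply: (@continuous_comp _ _ _ (fun k : {ptws X -> X} => k w) pi).
    exact: ptws_eval_continuous.
  exact: pi_continuous.
pose D (k : {ptws X -> X}) := pi (k y) - pi (k z).
have D_continuous : continuous D.
  move=> k; apply: (@continuous_comp _ _ _
    (fun k : {ptws X -> X} => (pi (k y), pi (k z))) (fun p : Xeq * Xeq => p.1 - p.2)).
    exact: (cvg_pair (pi_eval y k) (pi_eval z k)).
  exact: sub_continuous.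
have : Ellis s `<=` D @^-1` [set pi y - pi z].
  apply: Ellis_sub_closed.
    move/continuous_closedP: D_continuous; apply.
    exact/accessible_closed_set1/hausdorff_accessible.
  by move=> t; rewrite /D /= !pi_act opprD addrACA subrr addr0.
move=> /[apply]; rewrite /D /= => Dh.
rewrite /tpi -[pi (h y)](subrK (pi (h z))) Dh.
by rewrite [LHS]addrAC [_ - pi y]addrAC subrr add0r addrC.
Qed.

Lemma pi_idempotent u y : Ellis s u -> u \o u = u -> pi (u y) = pi y.
Proof.
move=> Eu uu; have := tpi_Ellis_const (u y) y Eu.
rewrite /tpi -[u (u y)]/((u \o u) y) uu subrr.
by move/eqP; rewrite eq_sym subr_eq0 => /eqP.
Qed.

Lemma regular_proximal_eq u p q :
  Ellis s u -> u \o u = u -> u p = u q -> regular s pi (pi p) -> p = q.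
Proof.
move=> Eu uu upq p_reg; apply: contrapT => npq; apply: p_reg.
exists p, q; split => //; last by exists u.
by rewrite -(pi_idempotent p Eu uu) upq pi_idempotent.
Qed.

End RotationFactor.

Section MinimalIdeal.
Variables (T : zmodType) (X : topologicalType) (s : T -> X -> X) (e : X -> X).
Hypothesis s_action : is_action s.
Hypothesis s_continuous : forall t, continuous (s t).
Hypothesis e_min : min_idempotent s e.

Let Ee : Ellis s e. Proof. by case: e_min. Qed.
Let ee : e \o e = e. Proof. by case: e_min. Qed.

Lemma Lof_Ellis f : Lof s e f -> Ellis s f.
Proof. by case=> k Ek <-; exact: Ellis_comp. Qed.

Lemma Lof_comp f g : Ellis s f -> Lof s e g -> Lof s e (f \o g).
Proof. by move=> Ef [k Ek <-]; exists (f \o k) => //; exact: Ellis_comp. Qed.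

Lemma Lof_e : Lof s e e.
Proof. by exists id => //; exact: Ellis_id. Qed.

Lemma Lof_idr f : Lof s e f -> f \o e = f.
Proof. by case=> k _ <-; rewrite -compA ee. Qed.

Lemma Gof_Lof a : Gof s e a -> Lof s e a.
Proof. by case=> f Lf <-; exact: Lof_comp. Qed.

Lemma Gof_idl a : Gof s e a -> e \o a = a.
Proof. by case=> f _ <-; rewrite compA ee. Qed.

Lemma Gof_idr a : Gof s e a -> a \o e = a.
Proof. by move/Gof_Lof; exact: Lof_idr. Qed.

Lemma Gof_comp a b : Gof s e a -> Gof s e b -> Gof s e (a \o b).
Proof.
case=> f Lf <- Gb; exists (f \o b) => //.
exact: Lof_comp (Lof_Ellis Lf) (Gof_Lof Gb).
Qed.

Lemma Gof_linv b : Gof s e b -> exists2 b', Gof s e b' & b' \o b = e.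
Proof.
move=> Gb; case: e_min => _ _ [_ L_min].
pose Lb := [set k \o b | k in Lof s e].
have Lb_sub : Lb `<=` Lof s e.
  by move=> _ [k Lk <-]; exact: Lof_comp (Lof_Ellis Lk) (Gof_Lof Gb).
have Lb_ideal : left_ideal s Lb.
  split; first by move=> f /Lb_sub; exact: Lof_Ellis.
    by exists (e \o b), e => //; exact: Lof_e.
  by move=> f _ Ef [k Lk <-]; exists (f \o k) => //; exact: Lof_comp.
have [k Lk kb] : Lb e by rewrite (L_min _ Lb_ideal Lb_sub); exact: Lof_e.
by exists (e \o k); [exists k | rewrite -compA kb ee].
Qed.

Lemma Gof_inv b :
  Gof s e b -> exists2 b', Gof s e b' & b' \o b = e /\ b \o b' = e.
Proof.
move=> Gb; have [b' Gb' b'b] := Gof_linv Gb.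
have [b'' Gb'' b''b'] := Gof_linv Gb'.
have b_b'' : b = b'' by rewrite -(Gof_idr Gb'') -b'b compA b''b' Gof_idl.
by exists b'; last by split; last rewrite b_b''.
Qed.

Lemma Lof_eq_of_separates z f g :
  e z = z -> separates_idempotents s e (f z) ->
  Lof s e f -> Lof s e g -> e \o f = e \o g -> f z = g z -> f = g.
Proof.
move=> ez sep Lf Lg /esym egf fgz.
(* a' is the inverse of e f in G; f a' and g a' are the idempotents to separate *)
have Ga : Gof s e (e \o f) by exists f.
have [a' Ga' [a'a _]] := Gof_inv Ga.
have a'_linv h : e \o h = e \o f -> a' \o h = e.
  by move=> eh; rewrite -(Gof_idr Ga') -compA eh a'a.
have idem h : Lof s e h -> e \o h = e \o f -> (h \o a') \o (h \o a') = h \o a'.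
  move=> Lh /a'_linv ha.
  by change (h \o (a' \o h) \o a' = h \o a'); rewrite ha Lof_idr.
have fix_z h : e \o h = e \o f -> h (a' (h z)) = h z.
  by move=> /a'_linv ha; rewrite -[a' (h z)]/((a' \o h) z) ha /= ez.
have L_a' h : Lof s e h -> Lof s e (h \o a').
  by move=> Lh; exact: Lof_comp (Lof_Ellis Lh) (Gof_Lof Ga').
have fa'_ga' : f \o a' = g \o a'.
  apply: sep; [exact: L_a'|exact: L_a'|exact: idem|exact: idem|].
  by rewrite /= fix_z // fgz fix_z.
rewrite -(Lof_idr Lf) -(Lof_idr Lg) -a'a.
by change ((f \o a') \o (e \o f) = (g \o a') \o (e \o f)); rewrite fa'_ga'.
Qed.

Section EllisMorphismEval.
Variables (X' : topologicalType) (s' : T -> X' -> X').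
Variables (Phi : (X -> X) -> (X' -> X')) (x : X) (x' : X').
Hypothesis Phi_morph : ellis_morphism s s' Phi.

Let Phi_Ellis f : Ellis s f -> Ellis s' (Phi f).
Proof. by case: Phi_morph => + _ _ _ _; apply. Qed.
Let Phi_comp f g y :
  Ellis s f -> Ellis s g -> Phi (f \o g) y = Phi f (Phi g y).
Proof. by case: Phi_morph => _ _ + _ _ Ef Eg; move/(_ f g Ef Eg) => ->. Qed.

Hypothesis e_x : e x = x.
Hypothesis Phi_stab : Phi @` stabG s e x `<=` stabG s' (Phi e) x'.

Lemma Phi_eval_stab f g : Lof s e f -> Lof s e g -> f x = g x ->
  exists2 g1, Lof s e g1 &
    [/\ g1 x = f x, e \o g1 = e \o f & Phi g1 x' = Phi g x'].
Proof.
move=> Lf Lg fgx.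
have Ga : Gof s e (e \o f) by exists f.
have Gb : Gof s e (e \o g) by exists g.
have [b' Gb' [b'b bb']] := Gof_inv Gb.
(* h = (e g)^-1 (e f) fixes x, hence by (3) Phi h fixes x'; take g1 = g h. *)
pose h := b' \o (e \o f).
have Gh : Gof s e h := Gof_comp Gb' Ga.
have hx : h x = x.
  by rewrite /h /= fgx -[b' (e (g x))]/((b' \o (e \o g)) x) b'b.
have [_ Phi_hx] : stabG s' (Phi e) x' (Phi h) by apply: Phi_stab; exists h.
exists (g \o h); first exact: Lof_comp (Lof_Ellis Lg) (Gof_Lof Gh).
split; first by rewrite /= hx fgx.
  by change ((e \o g) \o b' \o (e \o f) = e \o f); rewrite bb' Gof_idl.
rewrite Phi_comp ?Phi_hx //; first exact: Lof_Ellis.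
exact: Lof_Ellis (Gof_Lof Gh).
Qed.

Variables (Xeq' : topologicalZmodType) (chi' : T -> Xeq') (pi' : X' -> Xeq').
Hypothesis Xeq'_hausdorff : hausdorff_space Xeq'.
Hypothesis pi'_continuous : continuous pi'.
Hypothesis pi'_act : forall t y, pi' (s' t y) = pi' y + chi' t.

Lemma Phi_eval_regular f g : Lof s e f -> Lof s e g -> e \o f = e \o g ->
  regular s' pi' (pi' (Phi f x')) -> Phi f x' = Phi g x'.
Proof.
move=> Lf Lg efg.
apply: (regular_proximal_eq Xeq'_hausdorff pi'_continuous pi'_act (Phi_Ellis Ee)).
  by apply: funext => y; rewrite /= -Phi_comp ?ee.
by rewrite -!Phi_comp ?efg //; exact: Lof_Ellis.
Qed.

Variables (Xeq : zmodType) (pi : X -> Xeq).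
Hypothesis sep : forall y, singular s pi (pi y) -> separates_idempotents s e y.
Hypothesis reg : forall f, Lof s e f ->
  regular s pi (pi (f x)) -> regular s' pi' (pi' (Phi f x')).

Lemma Phi_eval_Lof f g :
  Lof s e f -> Lof s e g -> f x = g x -> Phi f x' = Phi g x'.
Proof.
move=> Lf Lg fgx.
have [g1 Lg1 [g1x eg1 <-]] := Phi_eval_stab Lf Lg fgx.
have [f_sing|f_reg] := pselect (singular s pi (pi (f x))).
  by rewrite (Lof_eq_of_separates e_x (sep f_sing) Lf Lg1 (esym eg1) (esym g1x)).
by apply: Phi_eval_regular; rewrite ?eg1 //; exact: reg.
Qed.

Hypothesis Phi_e_x' : Phi e x' = x'.

Lemma Phi_eval_Ellis k1 k2 :
  Ellis s k1 -> Ellis s k2 -> k1 x = k2 x -> Phi k1 x' = Phi k2 x'.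
Proof.
move=> E1 E2 k12.
have Phi_ke k : Ellis s k -> Phi k x' = Phi (k \o e) x'.
  by move=> Ek; rewrite Phi_comp ?Phi_e_x'.
rewrite (Phi_ke k1) // (Phi_ke k2) //.
by apply: Phi_eval_Lof; [exists k1|exists k2|rewrite /= e_x].
Qed.

End EllisMorphismEval.

End MinimalIdeal.

Section FactorOfEllisMorphism.
Variables (T : zmodType) (X X' : topologicalType).
Variables (s : T -> X -> X) (s' : T -> X' -> X').
Variables (Phi : (X -> X) -> (X' -> X')) (x : X) (x' : X').
Hypotheses (s_tds : tds s) (s_min : minimal_sys s).
Hypotheses (s'_tds : tds s') (s'_min : minimal_sys s').
Hypothesis Phi_morph : ellis_morphism s s' Phi.
Hypothesis Phi_eval : forall k1 k2,
  Ellis s k1 -> Ellis s k2 -> k1 x = k2 x -> Phi k1 x' = Phi k2 x'.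

Let X_hausdorff : hausdorff_space X. Proof. by case: s_tds. Qed.
Let X_compact : compact [set: X]. Proof. by case: s_tds. Qed.
Let X'_hausdorff : hausdorff_space X'. Proof. by case: s'_tds. Qed.
Let s_action : is_action s. Proof. by case: s_tds. Qed.
Let s_continuous t : continuous (s t). Proof. by case: s_tds. Qed.

Let orbit y := Ellis_orbit x y X_hausdorff X_compact s_min.

Let phi y : X' := Phi (projT1 (cid2 (orbit y))) x'.

Let phi_eval k : Ellis s k -> phi (k x) = Phi k x'.
Proof.
by move=> Ek; rewrite /phi; case: cid2 => k0 /= Ek0 k0x; exact: Phi_eval.
Qed.

Let phi_push f y : Ellis s f -> Phi f (phi y) = phi (f y).
Proof.
case: (orbit y) => k Ek <- Ef; case: Phi_morph => _ _ Phi_comp _ _.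
have Efk : Ellis s (f \o k) := Ellis_comp s_action s_continuous Ef Ek.
by rewrite phi_eval // (phi_eval Efk) (Phi_comp f k Ef Ek).
Qed.

Let phi_x : phi x = x'.
Proof.
case: Phi_morph => _ _ _ Phi_id _.
by rewrite (phi_eval (Ellis_id s_action)) Phi_id.
Qed.

Let phi_act t y : phi (s t y) = s' t (phi y).
Proof.
case: (orbit y) => k Ek <-; case: Phi_morph => _ _ _ _ Phi_act.
have Etk : Ellis s (s t \o k) := Ellis_comp_act s_action s_continuous Ek.
by rewrite (phi_eval Etk) (Phi_act t k Ek) phi_eval.
Qed.

Let phi_continuous : continuous phi.
Proof.
apply/continuous_closedP => C C_closed.
pose K := (Ellis s : set {ptws X -> X}) `&` (fun k => Phi k x') @^-1` C.
have K_closed : closed K.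
  rewrite /K closed_setSI; last exact: closed_closure.
  case: Phi_morph => _ Phi_continuous _ _ _.
  apply: (proj1 (continuous_closedP _)) C_closed => k.
  exact: continuous_comp (Phi_continuous k)
                        (@ptws_eval_continuous X' X' x' (Phi k)).
have -> : phi @^-1` C = (fun k : {ptws X -> X} => k x) @` K.
  apply/seteqP; split => [y Cy|_ [k [Ek Ck] <-]]; last by rewrite /= phi_eval.
  case: (orbit y) => k Ek kx; exists k => //.
  by split => //=; rewrite -phi_eval // kx.
apply: (compact_closed X_hausdorff); apply: continuous_compact.
  exact/continuous_subspaceT/ptws_eval_continuous.
by apply: (subclosed_compact K_closed (Ellis_compact (s := s) X_compact)) => k [].
Qed.

Let phi_surj y' : exists y, phi y = y'.
Proof.
have image_closed : closed (phi @` [set: X]).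
  apply: (compact_closed X'_hausdorff); apply: continuous_compact X_compact.
  exact/continuous_subspaceT.
have /(_ y')[y _ <-] : forall z, (phi @` [set: X]) z.
  apply: (minimal_orbit_closed s'_min image_closed (x := x')) => t.
  by exists (s t x); rewrite // phi_act phi_x.
by exists y.
Qed.

Lemma ellis_morphism_factor : exists phi : X -> X',
  [/\ factor_map s s' phi, phi x = x' &
      forall f, Ellis s f -> forall y, Phi f (phi y) = phi (f y)].
Proof.
exists phi; split; [by split|exact: phi_x|].
by move=> f Ef y; exact: phi_push.
Qed.

End FactorOfEllisMorphism.

Theorem mainTheorem8 (T : zmodType)
  (X X' : topologicalType) (s : T -> X -> X) (s' : T -> X' -> X')
  (Xeq Xeq' : topologicalZmodType) (chi : T -> Xeq) (chi' : T -> Xeq')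
  (pi : X -> Xeq) (pi' : X' -> Xeq')
  (Phi : (X -> X) -> (X' -> X')) (e : X -> X) (x : X) (x' : X') :
  tds s -> minimal_sys s -> ~ distal s ->
  tds s' -> minimal_sys s' -> ~ distal s' ->
  max_eq_factor s chi pi -> singular s pi 0 ->
  max_eq_factor s' chi' pi' -> singular s' pi' 0 ->
  no_extra_spectrum s pi -> no_extra_spectrum s' pi' ->
  ellis_morphism s s' Phi ->
  min_idempotent s e ->
  (exists y, pi y = 0 /\ x = e y) ->
  (exists y', pi' y' = 0 /\ x' = Phi e y') ->
  (* (1) *)
  (forall y, singular s pi (pi y) -> separates_idempotents s e y) ->
  (* (2) *)
  (forall f, Lof s e f -> forall (y : X) (y' : X'),
     regular s pi (tpi pi f y) -> regular s' pi' (tpi pi' (Phi f) y')) ->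
  (* (3) *)
  Phi @` stabG s e x `<=` stabG s' (Phi e) x' ->
  exists phi : X -> X',
    [/\ factor_map s s' phi, phi x = x' &
        forall f, Ellis s f -> forall y, Phi f (phi y) = phi (f y)].
Proof.
move=> s_tds s_min _ s'_tds s'_min _
  [Xeq_hausdorff _ _ [pi_continuous _ pi_act] _] _
  [Xeq'_hausdorff _ _ [pi'_continuous _ pi'_act] _] _ _ _ Phi_morph e_min
  [y [pi_y x_def]] [y' [pi'_y' x'_def]] sep reg stab.
have [_ _ s_action s_continuous] := s_tds.
have [Ee ee _] := e_min.
have [Phi_Ellis _ Phi_comp _ _] := Phi_morph.
have Phi_ee : Phi e \o Phi e = Phi e by rewrite -Phi_comp ?ee.
have e_x : e x = x by rewrite x_def -[e (e y)]/((e \o e) y) ee.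
have Phi_e_x' : Phi e x' = x'.
  by rewrite x'_def -[Phi e (Phi e y')]/((Phi e \o Phi e) y') Phi_ee.
have pi_x : pi x = 0.
  by rewrite x_def (pi_idempotent Xeq_hausdorff pi_continuous pi_act _ Ee ee).
have pi'_x' : pi' x' = 0.
  rewrite x'_def (pi_idempotent Xeq'_hausdorff pi'_continuous pi'_act) //.
  exact: Phi_Ellis.
apply: ellis_morphism_factor => //.
apply: (Phi_eval_Ellis s_action s_continuous e_min Phi_morph e_x stab
          Xeq'_hausdorff pi'_continuous pi'_act sep _ Phi_e_x') => f Lf.
by have := reg f Lf x x'; rewrite /tpi pi_x pi'_x' !subr0.
Qed.
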